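(* Let $G$ be a countable amenable group and $\{W_n\}$ an increasing sequence of finite subsets of $G$ with $1_G\in W_n$ such that (1) $\{W_n\}$ is a Følner sequence, and (2) for some constant $C$, each $W_n$ is individually $C$-filling. Then there exists a subsequence $\{W_{n(i)}\}$ which is filling.
   Context: Følner: $|W_n\triangle gW_n|/|W_n|\to0$ for every $g\in G$. A sequence $\{V_{n(i)}f_i\}_{i=1}^I$ of right translates of members of a sequence $\{V_n\}$ is incremental if $n(1)\ge\dots\ge n(I)$ and $f_i\notin\bigcup_{j<i}V_{n(j)}f_j$. A sequence $\{V_n\}$ with $1_G\in V_n$ is filling if for some $c>0$ every incremental sequence satisfies $|\bigcup V_{n(i)}f_i|\ge c\sum|V_{n(i)}f_i|$. A finite set $W\ni 1_G$ is individually $C$-filling if for every sequence $\{Wf_i\}$ with $f_i\notin\bigcup_{j<i}Wf_j$ one has $|\bigcup Wf_i|\ge C\sum|Wf_i|$. *)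

From Stdlib Require Import Reals.
From HB Require Import structures.
From mathcomp Require Import all_boot monoid.
From mathcomp Require Import finmap.

Set Implicit Arguments.
Unset Strict Implicit.
Unset Printing Implicit Defensive.

Local Open Scope fset_scope.
Local Open Scope group_scope.

Section Filling.
Variable G : groupType.

Definition countable_group : Prop := exists f : G -> nat, injective f.

Definition rtrans (V : {fset G}) (f : G) : {fset G} := [fset v * f | v in V].
Definition ltrans (g : G) (W : {fset G}) : {fset G} := [fset g * w | w in W].

Definition symdiff (A B : {fset G}) : {fset G} := (A `\` B) `|` (B `\` A).

Definition Folner (W : nat -> {fset G}) : Prop :=
  forall g : G,
    Un_cv (fun n => Rdiv (INR #|` symdiff (W n) (ltrans g (W n))|) (INR #|` W n|)) (INR 0).

Definition amenable : Prop :=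
  exists W : nat -> {fset G}, (forall n, W n != fset0) /\ Folner W.

Definition translates_union (V : nat -> {fset G}) (s : seq (nat * G)) : {fset G} :=
  \bigcup_(p <- s) rtrans (V p.1) p.2.

Definition translates_sum (V : nat -> {fset G}) (s : seq (nat * G)) : nat :=
  \sum_(p <- s) #|` rtrans (V p.1) p.2|.

Definition fresh_points (V : nat -> {fset G}) (s : seq (nat * G)) : Prop :=
  forall i, (i < size s)%N ->
    (nth (0%N, 1) s i).2 \notin translates_union V (take i s).

Definition incremental (V : nat -> {fset G}) (s : seq (nat * G)) : Prop :=
  sorted geq (map fst s) /\ fresh_points V s.

Definition filling (V : nat -> {fset G}) : Prop :=
  (forall n, 1 \in V n) /\
  exists c : R, Rlt (INR 0) c /\
    forall s : seq (nat * G), incremental V s ->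
      Rle (Rmult c (INR (translates_sum V s))) (INR #|` translates_union V s|).

Definition indiv_filling (C : R) (W : {fset G}) : Prop :=
  1 \in W /\
  forall fs : seq G, fresh_points (fun _ => W) (map (fun f => (0%nat, f)) fs) ->
    Rle (Rmult C (INR (translates_sum (fun _ => W) (map (fun f => (0%nat, f)) fs))))
        (INR #|` translates_union (fun _ => W) (map (fun f => (0%nat, f)) fs)|).

End Filling.

From Stdlib Require Import Reals Lra.
From mathcomp Require Import all_boot monoid.
From mathcomp Require Import finmap.

(* Group the translates of an incremental sequence by level, highest first.  The
   translates of the current lowest level k that miss everything above are controlled by
   the individual C-filling of V_k.  One that meets an earlier translate V_m f' has its
   point in (v^-1 V_m \ V_m) f' for some v in V_k, so there are at most
   sum_v |V_m Δ v^-1 V_m| of them per earlier translate, and they cost at most |V_k| each.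
   Induction on the levels bounds C Σ|V_{n(i)} f_i| by |∪ V_{n(i)} f_i| plus C times these
   Følner defects, and choosing each term of the subsequence Følner-good enough relative to
   the previous one makes the defect term at most half of Σ|V_{n(i)} f_i|: the subsequence
   is filling with constant C/2. *)

Set Implicit Arguments.
Unset Strict Implicit.
Unset Printing Implicit Defensive.

Local Open Scope fset_scope.
Local Open Scope group_scope.
Local Open Scope nat_scope.

Lemma card_bigfcup_leq (K : choiceType) (I : Type) (r : seq I) (F : I -> {fset K}) :
  #|` \bigcup_(i <- r) F i| <= \sum_(i <- r) #|` F i|.
Proof.
elim: r => [|i r IH]; first by rewrite !big_nil cardfs0.
by rewrite !big_cons (leq_trans (leq_card_fsetU _ _)) // leq_add2l.
Qed.

Lemma leq_sum_fsubset (K : choiceType) (A B : {fset K}) (F : K -> nat) :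
  A `<=` B -> \sum_(x <- A) F x <= \sum_(x <- B) F x.
Proof. by move=> /fsubsetP AB; apply: uniq_sub_le_big => // x y; apply: leq_addr. Qed.

Section Translates.
Variable G : groupType.
Implicit Types (V : nat -> {fset G}) (s : seq (nat * G)) (A B : {fset G}).

Lemma card_rtrans A f : #|` rtrans A f| = #|` A|.
Proof. by rewrite card_imfset //; apply: mulIg. Qed.

Lemma mem_rtrans A f x : reflect (exists2 v, v \in A & x = (v * f)%g) (x \in rtrans A f).
Proof. exact: imfsetP. Qed.

Lemma translates_union_nil V : translates_union V [::] = fset0.
Proof. exact: big_nil. Qed.

Lemma translates_union_cons V p s :
  translates_union V (p :: s) = rtrans (V p.1) p.2 `|` translates_union V s.
Proof. exact: big_cons. Qed.

Lemma translates_union_cat V s1 s2 :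
  translates_union V (s1 ++ s2) = translates_union V s1 `|` translates_union V s2.
Proof. exact: big_cat. Qed.

Lemma mem_translates_union V s x :
  reflect (exists2 p, p \in s & x \in rtrans (V p.1) p.2) (x \in translates_union V s).
Proof.
apply: (iffP (bigfcupP _ _ _ _)) => [[p /andP[ps _] xp]|[p ps xp]]; exists p => //.
by rewrite ps.
Qed.

Lemma translates_sum_cat V s1 s2 :
  translates_sum V (s1 ++ s2) = translates_sum V s1 + translates_sum V s2.
Proof. exact: big_cat. Qed.

Lemma translates_sum_filterID V s (P : pred (nat * G)) :
  translates_sum V s =
  translates_sum V [seq p <- s | P p] + translates_sum V [seq p <- s | ~~ P p].
Proof. by rewrite /translates_sum !big_filter (bigID P). Qed.

Lemma translates_sum_level V k s : {in s, forall p, p.1 = k} ->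
  translates_sum V s = size s * #|` V k|.
Proof.
move=> sk; rewrite /translates_sum (eq_big_seq (fun _ => #|` V k|)).
  by rewrite big_const_seq count_predT iter_addn_0 mulnC.
by move=> p /sk <-; rewrite card_rtrans.
Qed.

Fixpoint fresh_over V B s : Prop :=
  if s is p :: s' then p.2 \notin B /\ fresh_over V (B `|` rtrans (V p.1) p.2) s'
  else True.

Lemma fresh_overE V B s : fresh_over V B s <->
  forall i, i < size s -> (nth (0, 1%g) s i).2 \notin B `|` translates_union V (take i s).
Proof.
elim: s B => [|p s IH] B /=; first by split.
rewrite IH; split=> [[pB Hs] [|i] //= Hi|H].
- by rewrite translates_union_nil fsetU0.
- by rewrite translates_union_cons fsetUA; apply: Hs.
split; first by have := H 0 isT; rewrite translates_union_nil fsetU0.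
by move=> i Hi; rewrite -fsetUA -translates_union_cons; apply: (H i.+1).
Qed.

Lemma fresh_pointsE V s : fresh_points V s <-> fresh_over V fset0 s.
Proof. by rewrite fresh_overE; split=> H i /H; rewrite fset0U. Qed.

Lemma fresh_over_cat V B s1 s2 : fresh_over V B (s1 ++ s2) <->
  fresh_over V B s1 /\ fresh_over V (B `|` translates_union V s1) s2.
Proof.
elim: s1 B => [|p s1 IH] B /=; first by rewrite translates_union_nil fsetU0; tauto.
by rewrite IH translates_union_cons fsetUA; tauto.
Qed.

Lemma fresh_over_filter V B B' s (P : pred (nat * G)) :
  B' `<=` B -> fresh_over V B s -> fresh_over V B' [seq p <- s | P p].
Proof.
elim: s B B' => [|p s IH] B B' //= sub [pB Hs].
case: (P p) => /=; last exact: IH (fsubset_trans sub (fsubsetUl _ _)) Hs.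
split; first by apply: contra pB; apply/fsubsetP.
exact: IH (fsetSU _ sub) Hs.
Qed.

Lemma fresh_over_notin V B s p : fresh_over V B s -> p \in s -> p.2 \notin B.
Proof.
elim: s B => [|q s IH] B //= [qB Hs]; rewrite in_cons => /predU1P[-> //|ps].
by apply: contra (IH _ Hs ps); apply/fsubsetP/fsubsetUl.
Qed.

Lemma fresh_over_uniq V B s : (forall k, 1%g \in V k) -> fresh_over V B s ->
  uniq (map snd s).
Proof.
move=> V1; elim: s B => [|q s IH] B //= [_ Hs].
rewrite (IH _ Hs) andbT; apply/mapP => -[p ps qp].
have := fresh_over_notin Hs ps; rewrite -qp in_fsetU negb_or => /andP[_].
by case/negP; apply/mem_rtrans; exists 1%g; rewrite ?mul1g.
Qed.

Lemma translates_union_relabel V k s : {in s, forall p, p.1 = k} ->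
  translates_union (fun _ => V k) [seq (0, f) | f <- map snd s] = translates_union V s.
Proof.
move=> sk; rewrite /translates_union -map_comp big_map.
by apply: eq_big_seq => p /sk <-.
Qed.

Lemma translates_sum_relabel V k s : {in s, forall p, p.1 = k} ->
  translates_sum (fun _ => V k) [seq (0, f) | f <- map snd s] = translates_sum V s.
Proof.
move=> sk; rewrite /translates_sum -map_comp big_map.
by apply: eq_big_seq => p /sk <-.
Qed.

Lemma fresh_over_relabel V k B s : {in s, forall p, p.1 = k} ->
  fresh_over V B s -> fresh_over (fun _ => V k) B [seq (0, f) | f <- map snd s].
Proof.
elim: s B => [|q s IH] //= B sk [qB Hs]; split => //.
rewrite (sk q (mem_head _ _)) in Hs; apply: IH Hs => p ps.
by apply: sk; rewrite in_cons ps orbT.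
Qed.

End Translates.

Lemma sorted_level_split (T : eqType) (f : T -> nat) k (s : seq T) :
  sorted geq (map f s) -> s = [seq x <- s | k < f x] ++ [seq x <- s | f x <= k].
Proof.
elim: s => [|x s IH] //= s_srt.
case: ltnP => [kx|xk] /=; first by rewrite -IH // (path_sorted s_srt).
have below_x := order_path_min (rev_trans leq_trans) s_srt.
have below_k : {in s, forall y, f y <= k}.
  by move=> y ys; apply: leq_trans xk; apply: (allP below_x); apply: map_f.
rewrite (@eq_in_filter _ _ pred0) ?filter_pred0; last first.
  by move=> y /below_k; rewrite ltnNge => ->.
by rewrite (@eq_in_filter _ _ predT) ?filter_predT // => y /below_k ->.
Qed.

Section Overlap.
Variable G : groupType.
Implicit Types (V : nat -> {fset G}) (s : seq (nat * G)) (A : {fset G}).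

Definition defect A (g : G) : nat := #|` symdiff A (ltrans g A)|.

Definition overlap V j m : nat := #|` V j| * \sum_(v <- V j) defect (V m) v^-1.

Definition total_overlap V k s : nat := \sum_(p <- s) \sum_(k <= j < p.1) overlap V j p.1.

(* The factor [2 m] makes the overlaps charged to a translate of level [m] add up to
   at most [|V m| / 2]. *)
Definition small_overlaps V : Prop :=
  forall j m, j < m -> 2 * m * overlap V j m <= #|` V m|.

Lemma total_overlap_cat V k s1 L :
  {in s1, forall p, k < p.1} -> {in L, forall p, p.1 = k} ->
  total_overlap V k (s1 ++ L) = total_overlap V k.+1 s1 + \sum_(p <- s1) overlap V k p.1.
Proof.
move=> s1_gt L_k; rewrite /total_overlap big_cat /= [X in _ + X]big1_seq ?addn0.
  by rewrite -big_split; apply: eq_big_seq => p /s1_gt kp; rewrite big_ltn // addnC.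
by move=> p /andP[_ /L_k ->]; rewrite big_geq.
Qed.

Lemma total_overlap_half V s :
  small_overlaps V -> 2 * total_overlap V 0 s <= translates_sum V s.
Proof.
move=> V_small; rewrite /total_overlap big_distrr; apply: leq_sum => -[m f] _ /=.
rewrite card_rtrans; case: m => [|m]; first by rewrite big_geq.
rewrite -(@leq_pmul2l m.+1) // !big_distrr /=.
have -> : m.+1 * #|` V m.+1| = \sum_(0 <= j < m.+1) #|` V m.+1|.
  by rewrite sum_nat_const_nat subn0.
rewrite !big_mkord.
by apply: leq_sum => j _; rewrite mulnA (mulnC m.+1 2); apply: V_small.
Qed.

Lemma card_translates_union_disjoint V s1 L :
  #|` translates_union V s1|
    + #|` translates_union V
           [seq p <- L | [disjoint rtrans (V p.1) p.2 & translates_union V s1]%fset]|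
  <= #|` translates_union V (s1 ++ L)|.
Proof.
set Good := [seq p <- L | _].
have disj : [disjoint translates_union V s1 & translates_union V Good]%fset.
  apply/fdisjointP => x x_s1; apply/mem_translates_union => -[p].
  by rewrite mem_filter => /andP[/fdisjointP p_disj _] /p_disj; rewrite x_s1.
have := (leq_card_fsetU (translates_union V s1) (translates_union V Good)).2.
rewrite disj => /eqP <-; rewrite translates_union_cat fsubset_leq_card // fsetUS //.
apply/fsubsetP => x /mem_translates_union[p pG xp]; apply/mem_translates_union.
by exists p => //; move: pG; rewrite mem_filter => /andP[].
Qed.

Lemma count_meeting_translates V k s1 L : (forall j, 1%g \in V j) ->
  {in L, forall p, p.1 = k} -> fresh_over V fset0 (s1 ++ L) ->
  size [seq p <- L | ~~ [disjoint rtrans (V p.1) p.2 & translates_union V s1]%fset]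
  <= \sum_(p <- s1) \sum_(v <- V k) defect (V p.1) v^-1.
Proof.
move=> V1 L_k; rewrite fresh_over_cat fset0U => -[_ L_fresh].
set Y := \bigcup_(p <- s1) \bigcup_(v <- V k) rtrans (ltrans v^-1 (V p.1) `\` V p.1) p.2.
have card_Y : #|` Y| <= \sum_(p <- s1) \sum_(v <- V k) defect (V p.1) v^-1.
  apply: leq_trans (card_bigfcup_leq _ _) _; apply: leq_sum => p _.
  apply: leq_trans (card_bigfcup_leq _ _) _; apply: leq_sum => v _.
  by rewrite card_rtrans fsubset_leq_card // fsubsetUr.
apply: leq_trans card_Y; rewrite -(size_map snd) uniq_leq_size //.
  exact: fresh_over_uniq V1 (fresh_over_filter _ (fsub0set _) L_fresh).
move=> x /mapP[q]; rewrite mem_filter => /andP[q_meets qL] ->.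
have q_fresh := fresh_over_notin L_fresh qL.
case/fset0Pn: q_meets => _ /fsetIP[/mem_rtrans[v vV ->] /mem_translates_union[p ps]].
case/mem_rtrans => w wV vq_wp.
have q_eq : q.2 = (v^-1 * w * p.2)%g by rewrite -mulgA -vq_wp mulgA mulVg mul1g.
apply/bigfcupP; exists p; rewrite ?ps //; apply/bigfcupP; exists v; rewrite -?(L_k q) ?vV //.
apply/mem_rtrans; exists (v^-1 * w)%g => //; rewrite in_fsetD; apply/andP; split.
  apply: contra q_fresh => vw_Vp; apply/mem_translates_union; exists p => //.
  by rewrite q_eq; apply/mem_rtrans; exists (v^-1 * w)%g.
by apply/imfsetP; exists w.
Qed.

Section Filling.
Local Open Scope R_scope.

Lemma filling_single_level C V k L : indiv_filling C (V k) ->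
  {in L, forall p, p.1 = k} -> fresh_over V fset0 L ->
  C * INR (translates_sum V L) <= INR #|` translates_union V L|.
Proof.
move=> [_ Vk_filling] L_k L_fresh.
rewrite -(translates_sum_relabel V L_k) -(translates_union_relabel V L_k).
by apply: Vk_filling; apply/fresh_pointsE; apply: fresh_over_relabel.
Qed.

Variables (V : nat -> {fset G}) (C : R).
Hypotheses (C_gt0 : 0 < C) (V1 : forall k, 1%g \in V k).
Hypothesis V_filling : forall k, indiv_filling C (V k).

Lemma filling_up_to_overlap k s : sorted geq (map fst s) -> fresh_over V fset0 s ->
  {in s, forall p, (k <= p.1)%N} ->
  C * INR (translates_sum V s)
    <= INR #|` translates_union V s| + C * INR (total_overlap V k s).
Proof.
have [n s_lt] : exists n, {in s, forall p, (p.1 < k + n)%N}.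
  exists (\max_(p <- s) p.1).+1 => p ps.
  by rewrite addnS ltnS (leq_trans (leq_bigmax_seq _ ps isT)) ?leq_addl.
elim: n k s s_lt => [|n IHn] k s s_lt s_srt s_fresh s_ge.
  have -> : s = [::].
    case: s s_lt s_ge {s_srt s_fresh} => // p s /(_ p (mem_head _ _)).
    by rewrite addn0 ltnNge => /negP + /(_ p (mem_head _ _)).
  rewrite /translates_sum /translates_union /total_overlap !big_nil cardfs0 /=; lra.
set s1 := [seq p <- s | (k < p.1)%N]; set L := [seq p <- s | (p.1 <= k)%N].
have s_split : s = s1 ++ L := sorted_level_split k s_srt.
have s1_gt : {in s1, forall p, (k < p.1)%N} by move=> p; rewrite mem_filter => /andP[].
have L_k : {in L, forall p, p.1 = k}.
  move=> p; rewrite mem_filter => /andP[le_pk /s_ge le_kp].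
  by apply/eqP; rewrite eqn_leq le_pk.
have := s_fresh; rewrite s_split fresh_over_cat fset0U => -[s1_fresh L_fresh].
have IH : C * INR (translates_sum V s1)
    <= INR #|` translates_union V s1| + C * INR (total_overlap V k.+1 s1).
  apply: IHn => //.
  - by move=> p p_s1; rewrite addSnnS s_lt // (mem_subseq (filter_subseq _ _) p_s1).
  - exact: (subseq_sorted (rev_trans leq_trans) (map_subseq _ (filter_subseq _ _)) s_srt).
set P := fun p : nat * G => [disjoint rtrans (V p.1) p.2 & translates_union V s1]%fset.
have good : C * INR (translates_sum V [seq p <- L | P p])
    <= INR #|` translates_union V [seq p <- L | P p]|.
  apply: filling_single_level (V_filling k) _ (fresh_over_filter P (fsub0set _) L_fresh).
  by move=> p; rewrite mem_filter => /andP[_ /L_k].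
have bad : INR (translates_sum V [seq p <- L | ~~ P p])
    <= INR (\sum_(p <- s1) overlap V k p.1).
  apply/le_INR/leP; rewrite (translates_sum_level V (k:=k)); last first.
    by move=> p; rewrite mem_filter => /andP[_ /L_k].
  rewrite /overlap -big_distrr /= mulnC leq_mul2l.
  have s_fresh' : fresh_over V fset0 (s1 ++ L) by rewrite -s_split.
  by rewrite (count_meeting_translates V1 L_k s_fresh') orbT.
have union : INR #|` translates_union V s1| + INR #|` translates_union V [seq p <- L | P p]|
    <= INR #|` translates_union V (s1 ++ L)|.
  by rewrite -plus_INR; apply/le_INR/leP/card_translates_union_disjoint.
rewrite translates_sum_cat (translates_sum_filterID _ L P) total_overlap_cat // !plus_INR.
have := Rmult_le_compat_l C _ _ (Rlt_le _ _ C_gt0) bad; lra.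
Qed.

Lemma filling_of_small_overlaps : small_overlaps V -> filling V.
Proof.
move=> V_small; split => //; exists (C / 2); split; first by simpl; lra.
move=> s [s_srt /fresh_pointsE s_fresh].
have := filling_up_to_overlap s_srt s_fresh (fun p _ => leq0n p.1).
have := le_INR _ _ (leP (total_overlap_half s V_small)); rewrite mult_INR /=.
move: (INR (translates_sum V s)) (INR (total_overlap V 0 s)) => t r half_t.
have : 0 <= C * (t - 2 * r) by apply: Rmult_le_pos; lra.
nra.
Qed.

End Filling.

End Overlap.

Lemma eventually_all (T : eqType) (P : T -> nat -> Prop) (r : seq T) :
  (forall x, x \in r -> exists N, forall n, N <= n -> P x n) ->
  exists N, forall n, N <= n -> forall x, x \in r -> P x n.
Proof.
elim: r => [|x r IH] P_ev; first by exists 0.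
have [N1 HN1] := P_ev x (mem_head _ _).
have [|N2 HN2] := IH; first by move=> y yr; apply: P_ev; rewrite in_cons yr orbT.
exists (maxn N1 N2) => n; rewrite geq_max => /andP[N1n N2n] y.
by rewrite in_cons => /predU1P[->|/HN2]; [apply: HN1 | apply].
Qed.

Section RealRatio.
Local Open Scope R_scope.

Lemma ratio_small_lt (d M K : nat) : (0 < M)%N ->
  R_dist (INR d / INR M) (INR 0) < / INR K.+1 -> (K.+1 * d < M)%N.
Proof.
move=> /ltP /lt_0_INR M_gt0; have K_gt0 := lt_0_INR _ (Nat.lt_0_succ K).
rewrite /R_dist Rminus_0_r => /(Rle_lt_trans _ _ _ (Rle_abs _)) lt_inv.
apply/ltP/INR_lt; rewrite mult_INR.
have := Rmult_lt_compat_r (INR M * INR K.+1) _ _ (Rmult_lt_0_compat _ _ M_gt0 K_gt0) lt_inv.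
have -> : INR d / INR M * (INR M * INR K.+1) = INR d * INR K.+1 by field; lra.
have -> : / INR K.+1 * (INR M * INR K.+1) = INR M by field; lra.
by rewrite Rmult_comm.
Qed.

End RealRatio.

Section Subsequence.
Variables (G : groupType) (W : nat -> {fset G}).
Hypotheses (W_incr : forall n, W n `<=` W n.+1) (W1 : forall n, 1%g \in W n).
Hypothesis W_folner : Folner W.

Lemma card_W_gt0 n : 0 < #|` W n|.
Proof. by rewrite cardfs_gt0; apply/fset0Pn; exists 1%g. Qed.

Lemma W_homo : {homo W : m n / m <= n >-> m `<=` n}.
Proof. exact: homo_leq (@fsubset_refl _) (fun _ _ _ => @fsubset_trans _ _ _ _) W_incr. Qed.

Lemma folner_defect_eventually (K : nat) (g : G) :
  exists N, forall n, N <= n -> K * defect (W n) g <= #|` W n|.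
Proof.
have [N HN] := W_folner g (Rinv_0_lt_compat _ (lt_0_INR _ (Nat.lt_0_succ K))).
exists N => n /leP /HN /(ratio_small_lt (card_W_gt0 n)) /ltnW.
exact/leq_trans/leq_mul.
Qed.

Lemma folner_overlap_eventually (K : nat) (A : {fset G}) :
  exists N, forall n, N <= n -> K * \sum_(v <- A) defect (W n) v^-1 <= #|` W n|.
Proof.
have [N HN] := @eventually_all _ (fun v n => K * #|` A| * defect (W n) v^-1 <= #|` W n|) A
  (fun v _ => folner_defect_eventually _ _).
exists N => n /HN small; case: (posnP #|` A|) => [/cardfs0_eq -> | A_gt0].
  by rewrite big_nil muln0.
rewrite -(leq_pmul2l A_gt0) mulnCA !big_distrr /=.
have -> : #|` A| * #|` W n| = \sum_(v <- A) #|` W n|.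
  by rewrite big_const_seq count_predT iter_addn_0 mulnC.
by rewrite !big_seq; apply: leq_sum => v vA; rewrite mulnA small.
Qed.

Definition good_next_index i n : bool :=
  (i < n) && (2 * i.+1 * #|` W i| * \sum_(v <- W i) defect (W n) v^-1 <= #|` W n|).

Lemma exists_good_next_index i : exists n, good_next_index i n.
Proof.
have [N HN] := folner_overlap_eventually (2 * i.+1 * #|` W i|) (W i).
by exists (maxn N i.+1); rewrite /good_next_index leq_max ltnSn orbT HN // leq_maxl.
Qed.

Definition subseq_index (m : nat) : nat :=
  iter m (fun i => xchoose (exists_good_next_index i)) 0.

Lemma good_subseq_index m : good_next_index (subseq_index m) (subseq_index m.+1).
Proof. exact: xchooseP. Qed.

Lemma subseq_index_lt m : subseq_index m < subseq_index m.+1.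
Proof. by case/andP: (good_subseq_index m). Qed.

Lemma subseq_index_ge m : m <= subseq_index m.
Proof. by elim: m => // m IH; apply: leq_ltn_trans IH (subseq_index_lt m). Qed.

Lemma small_overlaps_subseq : small_overlaps (fun m => W (subseq_index m)).
Proof.
move=> j [//|m] jm; rewrite /overlap.
have /andP[_] := good_subseq_index m; apply: leq_trans.
have sub : W (subseq_index j) `<=` W (subseq_index m).
  by apply/W_homo/(homo_leq leqnn leq_trans (fun n => ltnW (subseq_index_lt n))).
rewrite -!mulnA leq_mul ?leq_mul ?fsubset_leq_card ?leq_sum_fsubset //.
by rewrite ltnS subseq_index_ge.
Qed.

End Subsequence.

Local Open Scope group_scope.

Theorem lemma2p2 (G : groupType) (W : nat -> {fset G}) (C : R) :
  countable_group G ->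
  amenable G ->
  (forall n, W n `<=` W n.+1) ->
  (forall n, 1 \in W n) ->
  Folner W ->
  Rlt (INR 0) C ->
  (forall n, indiv_filling C (W n)) ->
  exists phi : nat -> nat, (forall i, (phi i < phi i.+1)%N) /\
    filling (fun i => W (phi i)).
Proof.
move=> _ _ W_incr W1 W_folner C_gt0 W_filling.
exists (subseq_index W1 W_folner); split; first exact: subseq_index_lt.
apply: filling_of_small_overlaps C_gt0 _ _ _ => //.
exact: small_overlaps_subseq.
Qed.
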